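(* Let $\mathcal{G}=\langle S,A,T,s_0,F\rangle$ be a two-player turn-based deterministic reachability game, let $Y\subseteq\mathrm{Win}_2(\mathcal{G},F)\setminus F$, and let $s_1,s_2\in\mathrm{Win}_2(\mathcal{G},F)\setminus(F\cup Y)$. Then $\mathrm{DSWin}_1(\{s_1,s_2\},Y)$ equals P1's sure winning region in the turn-based game with state set $\mathrm{Win}_2(\mathcal{G}^2_{X,Y},F)$, where $X=\{s_1,s_2\}$, and transition function $\widehat T_{X,Y}$, in which P1's goal is to reach the target set $\mathrm{DSWin}_1(\{s_1\},Y)\cup\mathrm{DSWin}_1(\{s_2\},Y)$ and P2's goal is to prevent P1 from reaching it.
   Context: A two-player turn-based deterministic reachability game is a tuple $\mathcal{G}=\langle S,A,T,s_0,F\rangle$: $S$ finite, partitioned into P1 states $S_1$ and P2 states $S_2$; $A=A_1\cup A_2$ (P1 and P2 actions); $T:(S_1\times A_1)\cup(S_2\times A_2)\to S$ deterministic, possibly partial ($a$ enabled at $s$ iff $T(s,a)$ defined; every state has an enabled action); $s_0$ initial; $F\subseteq S$ a set of sink states (P2's goal). For a target $R\subseteq S$: $Z_0=R$, $Z_{k+1}=Z_k\cup\{s\in S_1:T(s,a)\in Z_k\ \forall\text{ enabled }a\}\cup\{s\in S_2:T(s,a)\in Z_k\text{ for some enabled }a\}$; $\mathrm{Win}_2(\mathcal{G},R)=\bigcup_kZ_k$; $\mathrm{rank}_{\mathcal{G},R}(s)=\min\{k:s\in Z_k\}$ ($\infty$ if none). For disjoint $X,Y\subseteq\mathrm{Win}_2(\mathcal{G},F)\setminus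 F$ (traps $X$, fake targets $Y$): the true game $\mathcal{G}^1_{X,Y}$ has states $S$, transitions $T_{X,Y}(q,a)=T(q,a)$ if $q\notin X\cup Y$ and $T_{X,Y}(q,a)=q$ if $q\in X\cup Y$; P2's perceptual game $\mathcal{G}^2_{X,Y}$ has transitions $T$ and goal $F\cup Y$, with $\mathrm{rank}_{\mathcal{G}^2_{X,Y}}:=\mathrm{rank}_{\mathcal{G},F\cup Y}$; $\mathrm{Win}_2(\mathcal{G}^2_{X,Y},F)$ is P2's winning region for target $F$ computed with transitions $T$. Subjectively rationalizable actions: for $q\in S_2\cap\mathrm{Win}_2(\mathcal{G},F)\setminus(F\cup Y)$, $\mathsf{SRActs}_{X,Y}(q)=\{a\text{ enabled}:\mathrm{rank}_{\mathcal{G}^2_{X,Y}}(T(q,a))<\mathrm{rank}_{\mathcal{G}^2_{X,Y}}(q)\}$; at every other state, all enabled actions. $\widehat T_{X,Y}(q,a)=T(q,a)$ if $a\in\mathsf{SRActs}_{X,Y}(q)$, undefined otherwise. A memoryless deterministic strategy of either player is subjectively rationalizable if it picks an action in $\mathsf{SRActs}_{X,Y}(q)$ at each of that player's states $q$. A memoryless deterministic P1 strategy $\pi_1$ is stealthy deceptive sure winning at $s$ if it is subjectively rationalizable and, for every subjectively rationalizable memoryless deterministic P2 strategy $\pi_2$, every path from $s$ generated by $(\pi_1,\pi_2)$ in the true game $\mathcal{G}^1_{X,Y}$ visits $X\cup Y$ within finitely many steps; $\mathrm{DSWin}_1(X,Y)$ is the set of states at which such a strategy exists. P1's sure winning region for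 a target $R'$ in a turn-based game is the set of states from which P1 has a strategy guaranteeing, against every P2 strategy, that every path visits $R'$ within finitely many steps. *)

From mathcomp Require Import all_boot.
From Stdlib Require Import ClassicalEpsilon.

Set Implicit Arguments.
Unset Strict Implicit.
Unset Printing Implicit Defensive.

(* A two-player turn-based deterministic game:
   - S : finite state type, p1 q = true iff q is a P1 state (P2 states: ~~ p1 q);
   - A : finite action type;
   - T : partial deterministic transition function (T q a = None: a not enabled at q). *)

Section Game.
Variables (S A : finType) (p1 : pred S) (T : S -> A -> option S).

Fixpoint attr (R : {set S}) (k : nat) : {set S} :=
  match k with
  | 0 => R
  | k'.+1 =>
      let Z := attr R k' in
      Z :|: [set s | p1 s && [forall a, if T s a is Some t then t \in Z else true]]
        :|: [set s | ~~ p1 s && [exists a, if T s a is Some t then t \in Z else false]]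
  end.

Definition Win2 (R : {set S}) (s : S) : Prop := exists k, s \in attr R k.

(* rank_{G,R}(s) = min {k | s \in Z_k}; None encodes infinity *)
Definition rank (R : {set S}) (s : S) : option nat :=
  match excluded_middle_informative (exists k, s \in attr R k) with
  | left H => Some (@ex_minn (fun k => s \in attr R k) H)
  | right _ => None
  end.

Definition rank_lt (x y : option nat) : bool :=
  match x, y with
  | Some m, Some n => m < n
  | Some _, None => true
  | None, _ => false
  end.

(* a \in SRActs_{X,Y}(q) (it does not depend on X); the perceptual rank is
   rank_{G, F \cup Y}. *)
Definition SRActs (F Y : {set S}) (q : S) (a : A) : Prop :=
  match T q a with
  | None => False
  | Some t =>
      (~~ p1 q /\ Win2 F q /\ q \notin F :|: Y) ->
      rank_lt (rank (F :|: Y) t) (rank (F :|: Y) q)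
  end.

(* \hat T_{X,Y}, restricted to the state set Win_2(G^2_{X,Y}, F) (= Win2 F, computed
   with T): relational form, q --a--> t. *)
Definition hat_step (F Y : {set S}) (q : S) (a : A) (t : S) : Prop :=
  Win2 F q /\ SRActs F Y q a /\ T q a = Some t /\ Win2 F t.

Definition SR1 (F Y : {set S}) (pi : S -> A) : Prop :=
  forall q, p1 q -> SRActs F Y q (pi q).
Definition SR2 (F Y : {set S}) (pi : S -> A) : Prop :=
  forall q, ~~ p1 q -> SRActs F Y q (pi q).

Definition Ttrue (X Y : {set S}) (q : S) (a : A) : option S :=
  if q \in X :|: Y then (if T q a is Some _ then Some q else None) else T q a.

Definition DSWin1 (F X Y : {set S}) (s : S) : Prop :=
  exists pi1 : S -> A, SR1 F Y pi1 /\
    forall pi2 : S -> A, SR2 F Y pi2 ->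
      forall p : nat -> S, p 0 = s ->
        (forall i, Ttrue X Y (p i) (if p1 (p i) then pi1 (p i) else pi2 (p i))
                   = Some (p i.+1)) ->
        exists i, p i \in X :|: Y.

End Game.

(* Strategies are general (history dependent) deterministic: sigma h q is the action
   chosen at current state q after history h (the earlier states); they must pick an
   enabled action at each of the player's states. *)
Definition sure_win1 (S A : Type) (p1 : pred S) (step : S -> A -> S -> Prop)
    (Dom : S -> Prop) (R : S -> Prop) (s : S) : Prop :=
  Dom s /\
  exists sigma1 : seq S -> S -> A,
    (forall h q, Dom q -> p1 q -> exists t, step q (sigma1 h q) t) /\
    forall sigma2 : seq S -> S -> A,
      (forall h q, Dom q -> ~~ p1 q -> exists t, step q (sigma2 h q) t) ->
      forall p : nat -> S, p 0 = s ->
        (forall i, step (p i)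
                        ((if p1 (p i) then sigma1 else sigma2) (mkseq p i) (p i))
                        (p i.+1)) ->
        exists i, R (p i).

From Pilot Require Import Defs.
From Stdlib Require Import ClassicalEpsilon Classical.
From mathcomp Require Import all_boot.

Set Implicit Arguments.
Unset Strict Implicit.
Unset Printing Implicit Defensive.

(* On W = Win_2(G, F) both sides are P1-attractors in the game (W, \hat T_{X,Y}).
   Until X \cup Y is reached the true game moves as G; a subjectively rationalizable P2
   move out of W \ (F \cup Y) lowers the perceptual rank, so it stays in
   Win_2(G, F \cup Y) = W, and F is absorbing.  Hence on W, DSWin_1(X, Y) is the attractor
   of X \cup Y: P1 wins it with the memoryless strategy lowering the attractor level, and
   outside it P2 has a memoryless rationalizable strategy that never enters it.  Sure
   winning for a target R is likewise the attractor of R, and the theorem becomes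
   Attr(X1 \cup X2 \cup Y) = Attr(Attr(X1 \cup Y) \cup Attr(X2 \cup Y)), which holds
   because attractors are monotone and idempotent. *)

Lemma fin_uniform_bound (A : finType) (P : A -> nat -> Prop) :
  (forall a j k, j <= k -> P a j -> P a k) -> (forall a, exists k, P a k) ->
  exists K, forall a, P a K.
Proof.
move=> Pmono Pex.
suff [K HK] : exists K, forall a, a \in enum A -> P a K.
  by exists K => a; apply: HK; rewrite mem_enum.
elim: (enum A) => [|b l [K IH]]; first by exists 0.
have [kb Hb] := Pex b; exists (maxn K kb) => a; rewrite inE => /orP[/eqP->|Ha].
- exact: Pmono (leq_maxr _ _) Hb.
- exact: Pmono (leq_maxl _ _) (IH a Ha).
Qed.

Lemma exists_play (S : Type) (next : seq S -> S -> S -> Prop) (Inv : S -> Prop) s :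
  Inv s -> (forall h q, Inv q -> exists2 t, next h q t & Inv t) ->
  exists2 p : nat -> S, p 0 = s &
    forall i, Inv (p i) /\ next (mkseq p i) (p i) (p i.+1).
Proof.
move=> Is Hnext.
have [nxt Hnxt] : exists nxt : seq S * S -> S,
    forall hq, Inv hq.2 -> next hq.1 hq.2 (nxt hq) /\ Inv (nxt hq).
  apply: (choice (fun hq t => Inv hq.2 -> next hq.1 hq.2 t /\ Inv t)) => -[h q] /=.
  have [Iq|nIq] := classic (Inv q); last by exists s => /nIq.
  by have [t] := Hnext h q Iq; exists t.
pose fix play n : seq S * S :=
  if n is n'.+1 then (rcons (play n').1 (play n').2, nxt (play n')) else ([::], s).
pose p n := (play n).2.
have hist n : (play n).1 = mkseq p n by elim: n => //= n ->; rewrite mkseqS.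
have Ip n : Inv (p n) by elim: n => // n IHn; exact: (Hnxt (play n) IHn).2.
by exists p => // i; split=> //; rewrite -hist; exact: (Hnxt (play i) (Ip i)).1.
Qed.

Section PlayerOneAttractor.
Variables (S : Type) (A : finType) (p1 : pred S) (step : S -> A -> S -> Prop).
Variables (Dom : S -> Prop).
Hypothesis step_det : forall q a t t', step q a t -> step q a t' -> t = t'.
Hypothesis step_dom : forall q a t, step q a t -> Dom t.
Hypothesis step_total : forall q, Dom q -> exists a t, step q a t.
Implicit Types (R : S -> Prop) (q t : S) (a : A).

Fixpoint attr1 R k q : Prop :=
  match k with
  | 0 => R q
  | k'.+1 =>
      [\/ attr1 R k' q,
          p1 q /\ (exists a t, step q a t /\ attr1 R k' t)
        | ~~ p1 q /\ (forall a t, step q a t -> attr1 R k' t)]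
  end.

Definition Attr1 R q := exists k, attr1 R k q.

Lemma attr1_mono R j k q : j <= k -> attr1 R j q -> attr1 R k q.
Proof.
elim: k => [|k IH]; first by rewrite leqn0 => /eqP->.
by rewrite leq_eqVlt ltnS => /orP[/eqP-> // | /IH Hk /Hk]; constructor 1.
Qed.

Lemma Attr1_target R q : R q -> Attr1 R q.
Proof. by exists 0. Qed.

Lemma Attr1_P1 R q a t : p1 q -> step q a t -> Attr1 R t -> Attr1 R q.
Proof. by move=> hp hs [k Hk]; exists k.+1; constructor 2; split=> //; exists a, t. Qed.

Lemma Attr1_P2 R q : ~~ p1 q -> (forall a t, step q a t -> Attr1 R t) -> Attr1 R q.
Proof.
move=> hp Hall.
have [K HK] : exists K, forall a t, step q a t -> attr1 R K t.
  apply: (fin_uniform_bound (P := fun a k => forall t, step q a t -> attr1 R k t)).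
    by move=> a j k hjk Hj t /Hj; apply: attr1_mono.
  move=> a; have [[t hs]|nostep] := classic (exists t, step q a t); last first.
    by exists 0 => t hs; case: nostep; exists t.
  have [k Hk] := Hall a t hs.
  by exists k => t' hs'; rewrite (step_det hs' hs).
by exists K.+1; constructor 3.
Qed.

Lemma Attr1_escape R q :
  ~~ p1 q -> ~ Attr1 R q -> exists a t, step q a t /\ ~ Attr1 R t.
Proof.
move=> hp hq; apply: NNPP => noesc; apply/hq/Attr1_P2 => // a t hs.
by apply: NNPP => ht; apply: noesc; exists a, t.
Qed.

Lemma Attr1_trans R1 R2 q :
  (forall x, Dom x -> R1 x -> Attr1 R2 x) -> Dom q -> Attr1 R1 q -> Attr1 R2 q.
Proof.
move=> H12 Dq [k]; elim: k q Dq => [|k IH] q Dq /=; first exact: H12.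
case=> [|[hp [a [t [hs ht]]]]|[hp Hall]]; first exact: IH.
- exact: Attr1_P1 hp hs (IH t (step_dom hs) ht).
- apply: (@Attr1_P2 R2 q hp) => a t hs; exact: IH (step_dom hs) (Hall a t hs).
Qed.

Lemma Attr1_mono_in R1 R2 q :
  (forall x, Dom x -> R1 x -> R2 x) -> Dom q -> Attr1 R1 q -> Attr1 R2 q.
Proof. by move=> H12; apply: Attr1_trans => x Dx /(H12 x Dx) /Attr1_target. Qed.

Lemma Attr1_or R1 R2 q : Dom q ->
  Attr1 (fun x => R1 x \/ R2 x) q <-> Attr1 (fun x => Attr1 R1 x \/ Attr1 R2 x) q.
Proof.
move=> Dq; split; first by apply: Attr1_mono_in => // x _ [] /Attr1_target; auto.
apply: Attr1_trans => // x Dx [] Hx; apply: Attr1_mono_in Hx => // y _; auto.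
Qed.

Definition descends R q a := exists k t, [/\ step q a t, attr1 R k t & ~ attr1 R k q].

Definition attractor_strategy R (pi : S -> A) :=
  forall q, p1 q -> (exists a, descends R q a) -> descends R q (pi q).

Lemma exists_attractor_strategy R (valid : S -> A -> Prop) :
  (forall q, exists a, valid q a) -> (forall q a t, step q a t -> valid q a) ->
  exists2 pi, attractor_strategy R pi & forall q, valid q (pi q).
Proof.
move=> Hval Hstep.
have [pi Hpi] : exists pi : S -> A,
    forall q, valid q (pi q) /\ ((exists a, descends R q a) -> descends R q (pi q)).
  apply: (choice (fun q a => valid q a /\ ((exists a, descends R q a) -> descends R q a))).
  move=> q; have [[a Ha]|nodesc] := classic (exists a, descends R q a).
    by exists a; split=> //; have [k [t [hs _ _]]] := Ha; exact: Hstep hs.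
  by have [a Ha] := Hval q; exists a.
by exists pi => q; [move=> _; exact: (Hpi q).2 | exact: (Hpi q).1].
Qed.

Lemma attractor_play_reaches R pi (p : nat -> S) :
  attractor_strategy R pi ->
  (forall i, ~ R (p i) -> Dom (p i) ->
     exists2 a, step (p i) a (p i.+1) & p1 (p i) -> a = pi (p i)) ->
  Dom (p 0) -> Attr1 R (p 0) -> exists i, R (p i).
Proof.
move=> Hpi Hp D0 [k]; elim: k 0 D0 => [|k IH] i Di Hk; first by exists i.
have [|nR] := classic (R (p i)); first by exists i.
have [|nk] := classic (attr1 R k (p i)); first exact: IH.
have [a hs ha] := Hp i nR Di; have Di' := step_dom hs.
case: (Hk) => [//|[hp [b [t [hbt ht]]]]|[hp Hall]]; last exact: IH Di' (Hall a _ hs).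
have [k' [t' [hs' ht' nk']]] : descends R (p i) (pi (p i)).
  by apply: (Hpi _ hp); exists b, k, t.
rewrite -(ha hp) in hs'; rewrite -(step_det hs hs') in ht'.
apply: IH Di' (attr1_mono _ ht'); rewrite leqNgt; apply/negP => hlt.
exact/nk'/attr1_mono/Hk.
Qed.

Theorem sure_win1_Attr1 R s : Dom s -> sure_win1 p1 step Dom R s <-> Attr1 R s.
Proof.
move=> Ds; have [a0 _] := step_total Ds; split.
- move=> [_ [sigma1 [Hsigma1 Hwin]]]; apply: NNPP => nA.
  have [pi2 Hpi2] : exists pi2 : S -> A, forall q, Dom q -> ~~ p1 q ->
      exists t, step q (pi2 q) t /\ (~ Attr1 R q -> ~ Attr1 R t).
    apply: (choice (fun q a => Dom q -> ~~ p1 q ->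
                      exists t, step q a t /\ (~ Attr1 R q -> ~ Attr1 R t))) => q.
    have [[a [t [hs nt]]]|noesc] := classic (exists a t, step q a t /\ ~ Attr1 R t).
      by exists a => _ _; exists t.
    have [Dq|nDq] := classic (Dom q); last by exists a0 => /nDq.
    have [a [t hs]] := step_total Dq; exists a => _ hp; exists t; split=> // nq.
    by case: noesc; apply: Attr1_escape.
  have [|p p0 Hp] := exists_play
    (next := fun h q t => step q ((if p1 q then sigma1 else fun _ => pi2) h q) t)
    (Inv := fun q => Dom q /\ ~ Attr1 R q) (conj Ds nA).
    move=> h q [Dq nq]; case: (boolP (p1 q)) => hp.
      have [t hs] := Hsigma1 h q Dq hp; exists t => //; split; first exact: step_dom hs.
      by move=> ht; apply: nq; exact: Attr1_P1 hp hs ht.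
    have [t [hs nt]] := Hpi2 q Dq hp; exists t => //; split; [exact: step_dom hs | exact: nt].
  have [|i Ri] := Hwin (fun _ => pi2) _ p p0 (fun i => (Hp i).2).
    by move=> h q Dq hp; have [t [hs _]] := Hpi2 q Dq hp; exists t.
  by apply: (Hp i).1.2; apply: Attr1_target.
- move=> HA.
  have [||pi Hpi Hval] := @exists_attractor_strategy R
    (fun q a => Dom q -> exists t, step q a t).
  + move=> q; have [Dq|nDq] := classic (Dom q); last by exists a0 => /nDq.
    by have [a [t hs]] := step_total Dq; exists a => _; exists t.
  + by move=> q a t hs _; exists t.
  split=> //; exists (fun _ => pi); split=> [h q Dq _|sigma2 _ p p0 Hp]; first exact: Hval.
  apply: (attractor_play_reaches Hpi); rewrite ?p0 // => i _ _.
  by exists ((if p1 (p i) then (fun _ => pi) else sigma2) (mkseq p i) (p i)) => // ->.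
Qed.

End PlayerOneAttractor.

Section PlayerTwoAttractor.
Variables (S A : finType) (p1 : pred S) (T : S -> A -> option S).
Implicit Types (R : {set S}) (q t : S) (a : A).

Local Notation attr := (attr p1 T).
Local Notation Win2 := (Win2 p1 T).
Local Notation rank := (rank p1 T).

Lemma attr_mono R j k : j <= k -> {subset attr R j <= attr R k}.
Proof.
elim: k => [|k IH]; first by rewrite leqn0 => /eqP->.
rewrite leq_eqVlt ltnS => /orP[/eqP-> // | /IH sub q /sub Hq] /=.
by rewrite !inE Hq.
Qed.

Lemma Win2_subset R R' q : R \subset R' -> Win2 R q -> Win2 R' q.
Proof.
move=> /subsetP sRR' [k Hk]; exists k; elim: k q Hk => [|k IH] q /=; first exact: sRR'.
rewrite !inE => /orP[/orP[/IH->//|/andP[hp /forallP H]]|/andP[hp /existsP[a H]]].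
- rewrite hp /=; apply/orP; left; apply/orP; right; apply/forallP => a.
  by move: (H a); case: (T q a) => // t /IH.
- rewrite hp /=; apply/orP; right; apply/existsP; exists a.
  by move: H; case: (T q a) => // t /IH.
Qed.

Lemma Win2_P1_pred R q : p1 q -> (forall a t, T q a = Some t -> Win2 R t) -> Win2 R q.
Proof.
move=> hp Hall.
have [K HK] : exists K, forall a t, T q a = Some t -> t \in attr R K.
  apply: (fin_uniform_bound (P := fun a k => forall t, T q a = Some t -> t \in attr R k)).
    by move=> a j k hjk Hj t /Hj; apply: attr_mono.
  move=> a; case hT: (T q a) => [t|]; last by exists 0.
  by have [k Hk] := Hall a t hT; exists k => _ [<-].
exists K.+1; rewrite /= !inE hp /=; apply/orP; left; apply/orP; right.
by apply/forallP => a; case hT: (T q a) => [t|] //; apply: HK hT.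
Qed.

Lemma Win2_P2_pred R q a t : ~~ p1 q -> T q a = Some t -> Win2 R t -> Win2 R q.
Proof.
move=> hp hT [k Hk]; exists k.+1; rewrite /= !inE (negbTE hp) /=.
by apply/orP; right; apply/existsP; exists a; rewrite hT.
Qed.

Lemma Win2_setU_absorb R (Y : {set S}) q :
  (forall y, y \in Y -> Win2 R y) -> Win2 (R :|: Y) q -> Win2 R q.
Proof.
move=> HY [k]; elim: k q => [|k IH] q /=.
  by rewrite inE => /orP[hq|/HY //]; exists 0.
rewrite !inE => /orP[/orP[/IH //|/andP[hp /forallP H]]|/andP[hp /existsP[a H]]].
- by apply: (Win2_P1_pred hp) => a t hT; apply: IH; move: (H a); rewrite hT.
- by move: H; case hT: (T q a) => [t|] // /IH; apply: (Win2_P2_pred hp hT).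
Qed.

Lemma Win2_P1_succ R q a t :
  Win2 R q -> p1 q -> T q a = Some t -> q \in R \/ Win2 R t.
Proof.
move=> [k]; elim: k q => [|k IH] q /=; first by left.
rewrite !inE => /orP[/orP[/IH //|/andP[_ /forallP H]]|/andP[hp _]] hq hT.
- by right; exists k; move: (H a); rewrite hT.
- by rewrite hq in hp.
Qed.

Lemma rank_lt_Win2 R t o : rank_lt (rank R t) o -> Win2 R t.
Proof. by rewrite /Defs.rank; case: excluded_middle_informative. Qed.

Lemma rankP R q : Win2 R q ->
  exists m, [/\ rank R q = Some m, q \in attr R m & forall n, q \in attr R n -> m <= n].
Proof.
by rewrite /Defs.rank; case: excluded_middle_informative => // H _; case: ex_minnP => m; exists m.
Qed.

Lemma rank_decrease R q : Win2 R q -> q \notin R -> ~~ p1 q ->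
  exists a t, T q a = Some t /\ rank_lt (rank R t) (rank R q).
Proof.
move=> Wq nR hp; have [[|m] [-> Hm Hmin]] := rankP Wq; first by rewrite /= (negbTE nR) in Hm.
move: Hm; rewrite /= !inE (negbTE hp) /= orbF => /orP[/Hmin|/existsP[a]].
  by rewrite ltnn.
case hT: (T q a) => [t|] // Ht; exists a, t; split=> //.
by have [m' [-> _ /(_ m Ht)]] := rankP (ex_intro _ m Ht).
Qed.

End PlayerTwoAttractor.

Section PerceptualGame.
Variables (S A : finType) (p1 : pred S) (T : S -> A -> option S) (F Y : {set S}).
Hypothesis Henabled : forall s, exists a, T s a <> None.
Hypothesis Hsink : forall f a, f \in F -> T f a <> None -> T f a = Some f.
Hypothesis HY : forall y, y \in Y -> Win2 p1 T F y /\ y \notin F.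
Implicit Types (q t : S) (a : A).

Local Notation W := (Win2 p1 T F).
Local Notation SR := (SRActs p1 T F Y).
Local Notation hat := (hat_step p1 T F Y).

Lemma hat_step_det q a t t' : hat q a t -> hat q a t' -> t = t'.
Proof. by move=> [_ [_ [hT _]]] [_ [_ [hT' _]]]; move: hT'; rewrite hT => -[]. Qed.

Lemma hat_step_dom q a t : hat q a t -> W t.
Proof. by case=> [_ [_ []]]. Qed.

Lemma sink_step q a t : q \in F -> T q a = Some t -> t = q.
Proof.
move=> qF hT; have : Some t = Some q by rewrite -hT; apply: Hsink; rewrite ?hT.
by case.
Qed.

Lemma Win2_P1_step q a t : W q -> p1 q -> T q a = Some t -> W t.
Proof.
by move=> Wq hp hT; case: (Win2_P1_succ Wq hp hT) => // qF; rewrite (sink_step qF hT).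
Qed.

Lemma SRActs_Some q a : SR q a -> exists t, T q a = Some t.
Proof. by rewrite /SRActs; case: (T q a) => // t; exists t. Qed.

Lemma SRActs_exists q : exists a, SR q a.
Proof.
have [a] := Henabled q; case hT: (T q a) => [t|] // _.
have [[hp [Wq nFY]]|unconstrained] := classic (~~ p1 q /\ W q /\ q \notin F :|: Y).
  have [b [t' [hT' lt_rank]]] := rank_decrease (Win2_subset (subsetUl F Y) Wq) nFY hp.
  by exists b; rewrite /SRActs hT' => _.
by exists a; rewrite /SRActs hT => /unconstrained.
Qed.

Lemma SRActs_hat_step q a t :
  W q -> p1 q || (q \notin Y) -> SR q a -> T q a = Some t -> hat q a t.
Proof.
move=> Wq hqY hSR hT; do !split=> //.
case hp: (p1 q) in hqY *; first exact: Win2_P1_step Wq hp hT.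
have [qF|nF] := boolP (q \in F); first by rewrite (sink_step qF hT).
have nFY : q \notin F :|: Y by rewrite inE negb_or nF.
move: hSR; rewrite /SRActs hT => /(_ (conj (negbT hp) (conj Wq nFY))) /rank_lt_Win2.
by apply: Win2_setU_absorb => y /HY[].
Qed.

Lemma hat_step_total q : W q -> exists a t, hat q a t.
Proof.
move=> Wq; case: (boolP (p1 q || (q \notin Y))) => [hqY|].
  have [a hSR] := SRActs_exists q; have [t hT] := SRActs_Some hSR.
  by exists a, t; apply: SRActs_hat_step.
rewrite negb_or negbK => /andP[hp qY]; have [_ nF] := HY qY.
have [a [t [hT /rank_lt_Win2 Wt]]] := rank_decrease Wq nF hp.
by exists a, t; do !split=> //; rewrite /SRActs hT => -[_ [_]]; rewrite inE qY orbT.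
Qed.

Lemma exists_SRActs_escape_strategy R : exists pi2 : S -> A, forall q, SR q (pi2 q) /\
  (~~ p1 q -> ~ Attr1 p1 hat R q -> exists t, hat q (pi2 q) t /\ ~ Attr1 p1 hat R t).
Proof.
apply: (choice (fun q a => SR q a /\
  (~~ p1 q -> ~ Attr1 p1 hat R q -> exists t, hat q a t /\ ~ Attr1 p1 hat R t))) => q.
have [[a [t [hs nt]]]|noesc] := classic (exists a t, hat q a t /\ ~ Attr1 p1 hat R t).
  by exists a; split; [case: hs => [_ []] | exists t].
have [a hSR] := SRActs_exists q; exists a; split=> // hp nq.
by case: noesc; apply: (Attr1_escape hat_step_det hp nq).
Qed.

Theorem DSWin1_Attr1 (X : {set S}) s :
  W s -> DSWin1 p1 T F X Y s <-> Attr1 p1 hat (fun q => q \in X :|: Y) s.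
Proof.
move=> Ws; set XY := fun q => q \in X :|: Y.
have Ttrue_out q a : ~ XY q -> Ttrue T X Y q a = T q a by rewrite /XY /Ttrue => /negP/negbTE->.
have out_Y q : ~ XY q -> p1 q || (q \notin Y).
  move=> nXY; have [qY|] := boolP (q \in Y); last by rewrite orbT.
  by case: nXY; rewrite /XY inE qY orbT.
split.
- move=> [pi1 [Hpi1 Hwin]]; apply: NNPP => nA.
  have [pi2 Hpi2] := exists_SRActs_escape_strategy XY.
  have [|p p0 Hp] := exists_play
    (next := fun _ q t => Ttrue T X Y q (if p1 q then pi1 q else pi2 q) = Some t)
    (Inv := fun q => W q /\ ~ Attr1 p1 hat XY q) (conj Ws nA).
    move=> _ q [Wq nq]; have nXY : ~ XY q by move=> hq; apply: nq; apply: Attr1_target.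
    rewrite Ttrue_out //; case: (boolP (p1 q)) => hp.
      have [t hT] := SRActs_Some (Hpi1 q hp).
      have hs := SRActs_hat_step Wq (out_Y q nXY) (Hpi1 q hp) hT.
      exists t => //; split; first exact: hat_step_dom hs.
      by move=> ht; apply: nq; apply: Attr1_P1 hp hs ht.
    by have [_ /(_ hp nq) [t [[_ [_ [hT Wt]]] nt]]] := Hpi2 q; exists t.
  have [i] := Hwin pi2 (fun q _ => (Hpi2 q).1) p p0 (fun i => (Hp i).2).
  by move=> XYi; apply: (Hp i).1.2; apply: Attr1_target.
- move=> HA.
  have [||pi Hpi HSR] := exists_attractor_strategy p1 (step := hat) XY (valid := SR).
  + exact: SRActs_exists.
  + by move=> q a t [_ []].
  exists pi; split=> [q _|pi2 Hpi2 p p0 Hp]; first exact: HSR.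
  apply: (attractor_play_reaches hat_step_det hat_step_dom Hpi).
  2,3: by rewrite p0.
  move=> i nXY Wi.
  have := Hp i; rewrite Ttrue_out //.
  set a := if p1 (p i) then pi (p i) else pi2 (p i) => hT.
  exists a; last by rewrite /a => ->.
  apply: SRActs_hat_step Wi (out_Y _ nXY) _ hT.
  by rewrite /a; case: ifP => hp; [apply: HSR | apply: Hpi2; rewrite hp].
Qed.

End PerceptualGame.

Theorem proposition4 (S A : finType) (p1 : pred S) (T : S -> A -> option S)
    (s0 : S) (F Y : {set S}) (s1 s2 : S)
    (Henabled : forall s, exists a, T s a <> None)
    (Hsink : forall f a, f \in F -> T f a <> None -> T f a = Some f)
    (HY : forall y, y \in Y -> Win2 p1 T F y /\ y \notin F)
    (Hs1 : Win2 p1 T F s1 /\ s1 \notin F :|: Y)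
    (Hs2 : Win2 p1 T F s2 /\ s2 \notin F :|: Y) :
  forall s, Win2 p1 T F s ->
    (DSWin1 p1 T F [set s1; s2] Y s <->
     sure_win1 p1 (hat_step p1 T F Y) (Win2 p1 T F)
       (fun q => DSWin1 p1 T F [set s1] Y q \/ DSWin1 p1 T F [set s2] Y q) s).
Proof.
move=> s Ws.
have det := @hat_step_det S A p1 T F Y.
have dom := @hat_step_dom S A p1 T F Y.
have DS := DSWin1_Attr1 Henabled Hsink HY.
rewrite DS // sure_win1_Attr1 //; last exact: hat_step_total.
have split_target q :
    q \in [set s1; s2] :|: Y <-> q \in [set s1] :|: Y \/ q \in [set s2] :|: Y.
  rewrite !inE -orbA; split=> [/or3P[] ->|[/orP[] ->|/orP[] ->]]; rewrite ?orbT; auto.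
pose R1 q := q \in [set s1] :|: Y; pose R2 q := q \in [set s2] :|: Y.
apply: iff_trans (iff_trans (Attr1_or p1 det dom R1 R2 Ws) _).
  by split; apply: (Attr1_mono_in det dom) => // q _ /split_target.
by split; apply: (Attr1_mono_in det dom) => // q Wq; rewrite !DS.
Qed.
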